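(* Let $k>l\ge0$ be integers, $\theta\in\mathbb{R}$, $\xi=e^{i\theta}$, $f:\mathbb{N}\to[0,\infty)$, and $A=\xi(a^\dagger)^ka^l+\xi^*(a^\dagger)^la^k+f(a^\dagger a)$ with domain $\mathcal{D}_0$. Let $K_\pm=\operatorname{Ran}(A\pm i)^\perp$ and $\psi^\pm\in K_\pm$, with coefficients $c^\pm_n=\langle\phi_n,\psi^\pm\rangle$. Then for all $n\in\mathbb{N}$, $$e^{-i\theta}\beta^{kl}_nc^\pm_{n+(k-l)}+e^{i\theta}\beta^{lk}_nc^\pm_{n-(k-l)}+(f(n)\mp i)c^\pm_n=0,$$ with the convention $c^\pm_m=0$ for $m<0$.
   Context: $\mathbb{N}=\{0,1,2,\dots\}$. $\mathcal{H}$ is a separable complex Hilbert space, inner product antilinear in the first argument, with orthonormal basis $(\phi_n)_{n\in\mathbb{N}}$; $\mathcal{D}_0$ is the set of finite linear combinations of the $\phi_n$. The operators $a,a^\dagger$ have domain $\mathcal{D}_0$ and act by $a\phi_n=\sqrt{n}\,\phi_{n-1}$ ($a\phi_0=0$), $a^\dagger\phi_n=\sqrt{n+1}\,\phi_{n+1}$, extended linearly. $f(a^\dagger a)$ has domain $\mathcal{D}_0$ and $f(a^\dagger a)\phi_n=f(n)\phi_n$. For integers $x$ and $s\ge0$, $(x,s)=x(x+1)\cdots(x+s-1)$ ($=1$ if $s=0$), with the convention $(x,s)=0$ whenever $x$ is a negative integer; for integers $n$ and $k,l\ge0$, $\beta^{kl}_n=\sqrt{(n-l+1,l)(n-l+1,k)}$.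 *)

From mathcomp Require Import all_boot all_order all_algebra.
From mathcomp Require Import all_classical all_reals all_analysis.
From mathcomp Require Import complex.
Set Implicit Arguments. Unset Strict Implicit. Unset Printing Implicit Defensive.
Import Order.TTheory GRing.Theory Num.Theory.
Local Open Scope ring_scope.
Local Open Scope complex_scope.

(* The Hilbert space H is modelled as l^2(N) over C = R[i]: a vector is its
   coefficient sequence (n |-> <phi_n, x>), so phi_n is the n-th unit sequence. *)
Section Defs.
Variable R : realType.
Local Notation C := R[i].

Definition l2 (x : nat -> C) : Prop :=
  exists B : R, forall N : nat, \sum_(n < N) `|x n| ^+ 2 <= B%:C.

Definition finsupp (x : nat -> C) : Prop :=
  exists N : nat, forall n : nat, (N <= n)%N -> x n = 0.

(* a phi_n = sqrt n phi_{n-1}, a phi_0 = 0, extended linearly: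
   coefficientwise (a x)_n = sqrt(n+1) x_{n+1} *)
Definition ann (x : nat -> C) : nat -> C :=
  fun n => (Num.sqrt (n.+1)%:R : R)%:C * x n.+1.

(* a^dag phi_n = sqrt(n+1) phi_{n+1}: (a^dag x)_0 = 0, (a^dag x)_{m+1} = sqrt(m+1) x_m *)
Definition cre (x : nat -> C) : nat -> C :=
  fun n => if n is m.+1 then (Num.sqrt (m.+1)%:R : R)%:C * x m else 0.

Definition expi (theta : R) : C := cos theta +i* sin theta.

Definition opA (k l : nat) (theta : R) (f : nat -> R) (x : nat -> C) : nat -> C :=
  fun n => expi theta * iter k cre (iter l ann x) n
         + (expi theta)^* * iter l cre (iter k ann x) n
         + (f n)%:C * x n.

Definition pmi (pm : bool) : C := if pm then 'i else - 'i.
Definition opApm (pm : bool) (k l : nat) (theta : R) (f : nat -> R) (x : nat -> C)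
  : nat -> C := fun n => opA k l theta f x n + pmi pm * x n.

(* psi in Ran(B)^perp, B with domain D_0: <B phi, psi> = 0 for all phi in D_0,
   the inner product (antilinear in the first argument) of the finitely
   supported vector B phi with psi being the finite sum over any support bound. *)
Definition orth_ran (B : (nat -> C) -> (nat -> C)) (psi : nat -> C) : Prop :=
  forall phi, finsupp phi ->
  forall M : nat, (forall n, (M <= n)%N -> B phi n = 0) ->
  \sum_(n < M) (B phi n)^* * psi n = 0.

Definition coefz (psi : nat -> C) (m : int) : C :=
  if m is Posz m' then psi m' else 0.
End Defs.

Definition poch (x : int) (s : nat) : int :=
  if (x < 0)%R then 0 else \prod_(i < s) (x + (i : nat)%:Z)%R.

Definition beta {R : realType} (k l : nat) (n : int) : R :=
  Num.sqrt ((poch (n - l%:Z + 1) l * poch (n - l%:Z + 1) k)%R%:~R).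

From mathcomp Require Import all_boot all_order all_algebra.
From mathcomp Require Import all_classical all_reals all_analysis.
From mathcomp Require Import complex.
From mathcomp Require Import zify.
Import Order.TTheory GRing.Theory Num.Theory.
Local Open Scope ring_scope.
Local Open Scope complex_scope.

(* Pair psi with the basis vector phi_n.  The ladder operators act on the
   basis by a^l phi_n = sqrt(n^_l) phi_(n-l) and
   (a^dag)^k phi_m = sqrt((m+k)^_k) phi_(m+k), with falling factorials that
   vanish for n < l, so (a^dag)^k a^l phi_n = beta^kl_n phi_(n-l+k) where
   beta^kl_n = sqrt(n^_l (n-l+k)^_k).  Hence (A +- i) phi_n has coefficients
   xi beta^kl_n, xi^* beta^lk_n and f(n) +- i at n-l+k, n-k+l and n, and
   <(A +- i) phi_n, psi> = 0 is the conjugate of the claimed relation. *)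

Lemma prod_rising_ffact (m s : nat) :
  (\prod_(i < s) (m.+1 + i) = (m + s) ^_ s)%N.
Proof.
elim: s m => [|s IH] m; first by rewrite big_ord0.
rewrite big_ord_recl addn0.
under eq_bigr => i _ do rewrite /bump /= addnS -addSn.
by rewrite IH addnS -addSn ffactnSr addnK mulnC.
Qed.

Lemma poch_nat (m s : nat) : poch m.+1%:Z s = ((m + s) ^_ s)%:Z.
Proof.
rewrite /poch ltNge /= -prod_rising_ffact.
by rewrite (big_morph Posz PoszM (erefl 1%:Z)).
Qed.

Lemma poch_nonpos (x : int) (s : nat) : x <= 0 -> (0 < s)%N -> poch x s = 0.
Proof.
rewrite /poch; case: ifP => // /negbT; rewrite -leNgt => x_ge0 x_le0.
have -> : x = 0 by apply/eqP; rewrite eq_le x_le0 x_ge0.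
by case: s => // s _; rewrite big_ord_recl addr0 mul0r.
Qed.

Lemma beta_ffact (R : realType) (a b n : nat) :
  @beta R a b n = Num.sqrt ((n ^_ b * (n - b + a) ^_ a)%N%:R).
Proof.
rewrite /beta; have [le_bn | lt_nb] := leqP b n.
  have -> : n%:Z - b%:Z + 1 = (n - b).+1%:Z by lia.
  by rewrite !poch_nat subnK // -PoszM.
have -> : poch (n%:Z - b%:Z + 1) b = 0 by apply: poch_nonpos; lia.
by rewrite ffact_small // mul0r.
Qed.

Lemma beta_small (R : realType) (a b n : nat) : (n < b)%N -> @beta R a b n = 0.
Proof. by move=> lt_nb; rewrite beta_ffact ffact_small ?sqrtr0. Qed.

Section Ladder.
Variable R : realType.
Local Notation C := R[i].
Local Notation sqrtC n := ((Num.sqrt (n%:R : R))%:C : C).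

Definition basis (n : nat) : nat -> C := fun j => (j == n)%:R.

Lemma basis_small m j : (m < j)%N -> basis m j = 0.
Proof. by move=> lt_mj; rewrite /basis gtn_eqF. Qed.

Lemma finsupp_basis n : finsupp (basis n).
Proof. by exists n.+1 => j; apply: basis_small. Qed.

Lemma sqrtC0 : sqrtC 0 = 0.
Proof. by rewrite sqrtr0. Qed.

Lemma sqrtCM (a b : nat) : sqrtC (a * b)%N = sqrtC a * sqrtC b.
Proof. by rewrite natrM sqrtrM ?ler0n // rmorphM. Qed.

Lemma iter_ann l (x : nat -> C) n :
  iter l (@ann R) x n = sqrtC ((n + l) ^_ l) * x (n + l)%N.
Proof.
elim: l n => [|l IH] n; first by rewrite addn0 sqrtr1 mul1r.
rewrite /= {1}/ann IH mulrA -sqrtCM addSnnS; congr (sqrtC _ * _).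
by rewrite ffactnSr addnS subSn ?leq_addl // addnK mulnC.
Qed.

Lemma iter_cre k (x : nat -> C) n :
  iter k (@cre R) x n = sqrtC (n ^_ k) * x (n - k)%N.
Proof.
elim: k n => [|k IH] [|n] //=; rewrite ?subn0 ?sqrtr1 ?mul1r //.
- by rewrite sqrtr0 mul0r.
- by rewrite IH mulrA -sqrtCM.
Qed.

Lemma iter_ann_basis l n j :
  iter l (@ann R) (basis n) j = sqrtC (n ^_ l) * basis (n - l) j.
Proof.
rewrite iter_ann /basis; have [<- | ne] := eqVneq (j + l)%N n.
  by rewrite addnK eqxx.
rewrite mulr0; have [le_ln | lt_nl] := leqP l n.
  by rewrite (_ : (j == n - l)%N = false) ?mulr0 //; lia.
by rewrite ffact_small // sqrtC0 mul0r.
Qed.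

Lemma iter_cre_basis k m j :
  iter k (@cre R) (basis m) j = sqrtC ((m + k) ^_ k) * basis (m + k) j.
Proof.
rewrite iter_cre /basis; have [le_kj | lt_jk] := leqP k j.
  have [-> | ne] := eqVneq j (m + k)%N; first by rewrite addnK !eqxx.
  by rewrite (_ : (j - k == m)%N = false) ?mulr0 //; lia.
rewrite ffact_small // sqrtC0 mul0r.
by rewrite (_ : (j == m + k)%N = false) ?mulr0 //; lia.
Qed.

Lemma iter_cre_ann_basis k l n j :
  iter k (@cre R) (iter l (@ann R) (basis n)) j
  = (@beta R k l n)%:C * basis (n - l + k) j.
Proof.
rewrite iter_cre iter_ann_basis mulrCA -iter_cre iter_cre_basis.
by rewrite mulrA -sqrtCM beta_ffact.
Qed.

(* [x^*%R] is [Num.conj x], the conjugation used in [opA] and [orth_ran];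
   in [complex_scope] a bare [x^*] would denote [conjc x]. *)
Lemma opApm_basis pm k l theta (f : nat -> R) n j :
  opApm pm k l theta f (basis n) j
  = expi theta * (@beta R k l n)%:C * basis (n - l + k) j
  + (expi theta)^*%R * (@beta R l k n)%:C * basis (n - k + l) j
  + ((f n)%:C + pmi R pm) * basis n j.
Proof.
rewrite /opApm /opA !iter_cre_ann_basis !mulrA -addrA -mulrDl /basis.
by have [-> | _] := eqVneq j n; rewrite ?mulr0.
Qed.

Lemma sum_conj_basis M m (c : C) (psi : nat -> C) : (m < M)%N ->
  \sum_(j < M) (c * basis m j)^*%R * psi j = c^*%R * psi m.
Proof.
move=> lt_mM; rewrite (bigD1 (Ordinal lt_mM)) //= /basis eqxx mulr1.
rewrite big1 ?addr0 // => j /negbTE ne_jm.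
by rewrite (_ : (j == m :> nat) = false) // mulr0 conjC0 mul0r.
Qed.

Lemma conj_realC (x : R) : (x%:C)^*%R = x%:C.
Proof. exact: conjc_real. Qed.

Lemma expiN (t : R) : expi (- t) = (expi t)^*%R.
Proof. by rewrite /expi cosN sinN. Qed.

Lemma conj_pmi pm : (pmi R pm)^*%R = - pmi R pm.
Proof. by case: pm; apply/eqP; rewrite eq_complex /= ?oppr0 ?opprK !eqxx. Qed.

End Ladder.

Theorem lemma4p6 (R : realType) (k l : nat) (theta : R) (f : nat -> R) :
  (l < k)%N -> (forall n, 0 <= f n) ->
  forall (pm : bool) (psi : nat -> R[i]),
  l2 psi -> orth_ran (opApm pm k l theta f) psi ->
  forall n : nat,
    expi (- theta) * (@beta R k l n)%:C * psi (n + (k - l))%N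
    + expi theta * (@beta R l k n)%:C * coefz psi (n%:Z - (k - l)%N%:Z)
    + ((f n)%:C - @pmi R pm) * psi n = 0.
Proof.
move=> lt_lk _ pm psi _ orth n.
have vanish j : ((n + k).+1 <= j)%N -> opApm pm k l theta f (basis R n) j = 0.
  by move=> lt_j; rewrite opApm_basis !basis_small ?mulr0 ?addr0 //; lia.
have := orth _ (finsupp_basis R n) _ vanish.
under eq_bigr => j _ do rewrite opApm_basis !rmorphD !(mulrDl _ _ (psi j)).
rewrite !big_split /= !sum_conj_basis; try lia.
rewrite !rmorphM /= rmorphD /= conj_pmi !conj_realC conjCK -expiN.
have [le_ln | lt_nl] := leqP l n; last first.
  by rewrite !beta_small ?mulr0 ?mul0r ?add0r //; lia.
rewrite (_ : (n - l + k = n + (k - l))%N); last by lia.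
have [le_kn | lt_nk] := leqP k n; last by rewrite (@beta_small R l k n) ?mulr0 ?mul0r.
by rewrite (_ : n%:Z - (k - l)%N%:Z = (n - k + l)%N); last by lia.
Qed.
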